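(* Let $G,H,F,K$ be graphs such that there is a quantum homomorphism from $G$ to $F$ and a quantum homomorphism from $H$ to $K$. Then there are quantum homomorphisms (1) from $G\,\square\,H$ to $F\,\square\,K$; (2) from $G\times H$ to $F\times K$; (3) from $G\boxtimes H$ to $F\boxtimes K$; (4) from $G * H$ to $F * K$; (5) from $G[H]$ to $F[K]$.
   Context: Graphs are finite, simple and undirected; no vertex is adjacent to itself. All products below have vertex set $V(G)\times V(H)$. Cartesian product $G\,\square\,H$: $(u_1,v_1)\sim(u_2,v_2)$ iff ($u_1\sim u_2$ and $v_1=v_2$) or ($u_1=u_2$ and $v_1\sim v_2$). Categorical product $G\times H$: iff $u_1\sim u_2$ and $v_1\sim v_2$. Strong product $G\boxtimes H$: the edge union of $G\times H$ and $G\,\square\,H$. Disjunctive product $G*H$: iff $u_1\sim u_2$ or $v_1\sim v_2$. Lexicographic product $G[H]$: iff $u_1\sim u_2$, or ($u_1=u_2$ and $v_1\sim v_2$). For a graph $F$ and integer $d\ge1$, the measurement graph $M(F,d)$ has as vertices all tuples $(E_w)_{w\in V(F)}$ of orthogonal projectors in $\mathbb{C}^{d\times d}$ with $\sum_w E_w=I$; $(E_w)$ and $(E'_w)$ are adjacent iff $E_wE'_{w'}=0$ for all $w,w'$ with $w\not\sim w'$ (including $w=w'$). A quantum homomorphism from $G$ to $F$ is a graph homomorphism from $G$ to $M(F,d)$ for some $d$. *)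

From mathcomp Require Import all_boot all_algebra.
From mathcomp Require Import complex.
From mathcomp Require Import Rstruct.
Set Implicit Arguments.
Unset Strict Implicit.
Unset Printing Implicit Defensive.
Import GRing.Theory Num.Theory.
Local Open Scope ring_scope.

Definition CC : numClosedFieldType := (Rdefinitions.R)[i].

Definition simple_graph (V : finType) (e : rel V) : Prop :=
  symmetric e /\ irreflexive e.

Section Products.
Variables (V W : finType) (eG : rel V) (eH : rel W).

Definition cart_prod : rel (V * W) := fun x y =>
  (eG x.1 y.1 && (x.2 == y.2)) || ((x.1 == y.1) && eH x.2 y.2).

Definition cat_prod : rel (V * W) := fun x y => eG x.1 y.1 && eH x.2 y.2.

Definition strong_prod : rel (V * W) := fun x y => cat_prod x y || cart_prod x y.

Definition disj_prod : rel (V * W) := fun x y => eG x.1 y.1 || eH x.2 y.2.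

Definition lex_prod : rel (V * W) := fun x y =>
  eG x.1 y.1 || ((x.1 == y.1) && eH x.2 y.2).
End Products.

Definition orth_proj (d : nat) (E : 'M[CC]_d) : Prop :=
  E *m E = E /\ map_mx Num.conj E^T = E.

(* Vertices of the measurement graph M(F,d): tuples (E_w)_{w in V(F)} of
   orthogonal projectors summing to the identity. *)
Definition meas_vertex (VF : finType) (d : nat) (E : VF -> 'M[CC]_d) : Prop :=
  (forall w, orth_proj (E w)) /\ \sum_(w : VF) E w = 1%:M.

Definition meas_adj (VF : finType) (eF : rel VF) (d : nat)
    (E E' : VF -> 'M[CC]_d) : Prop :=
  forall w w' : VF, ~~ eF w w' -> E w *m E' w' = 0.

(* A quantum homomorphism from G to F: a graph homomorphism from G to
   M(F,d) for some d >= 1. *)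
Definition quantum_hom (VG VF : finType) (eG : rel VG) (eF : rel VF) : Prop :=
  exists (d : nat) (p : VG -> VF -> 'M[CC]_d),
    (0 < d)%N /\
    (forall x, meas_vertex (p x)) /\
    (forall x y, eG x y -> meas_adj eF (p x) (p y)).

From mathcomp Require Import all_boot all_algebra.
From mathcomp Require Import mxtens spectral.
Import GRing.Theory Num.Theory.
Local Open Scope ring_scope.
Local Open Scope sesquilinear_scope.
Set Implicit Arguments. Unset Strict Implicit.

(* Given measurement-valued homomorphisms p : G -> M(F,d1) and
   q : H -> M(K,d2), the tensor products p x w ⊗ q y k form a measurement
   indexed by V(F) × V(K), and one map serves all five products.  The
   product p x w p x' w' ⊗ q y k q y' k' vanishes as soon as one factor
   does, which happens when x ~ x' and w ≁ w' (homomorphism), or when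
   x = x' and w ≠ w': projectors summing to the identity are pairwise
   orthogonal, since  Σ_{v≠w} tr((E_w E_v)(E_w E_v)^* ) = tr(E_w (1 - E_w) E_w) = 0
   is a sum of nonnegative terms.  For each product graph, every edge
   (x,y) ~ (x',y') and non-edge (w,k) ≁ (w',k') puts one coordinate in one
   of these two situations. *)

Section TraceAdjoint.
Context {C : numClosedFieldType}.

Lemma mxtrace_mul_trC m n (A : 'M[C]_(m, n)) :
  \tr (A *m A ^t* ) = \sum_i \sum_j A i j * (A i j)^*.
Proof.
apply: eq_bigr => i _; rewrite mxE.
by apply: eq_bigr => j _; rewrite !mxE.
Qed.

Lemma mxtrace_mul_trC_ge0 m n (A : 'M[C]_(m, n)) : 0 <= \tr (A *m A ^t* ).
Proof.
rewrite mxtrace_mul_trC; apply: sumr_ge0 => i _; apply: sumr_ge0 => j _.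
exact: mul_conjC_ge0.
Qed.

Lemma mxtrace_mul_trC_eq0 m n (A : 'M[C]_(m, n)) :
  \tr (A *m A ^t* ) = 0 -> A = 0.
Proof.
rewrite mxtrace_mul_trC => tr0; apply/matrixP => i j; rewrite mxE.
have row0 := psumr_eq0P (fun i _ => sumr_ge0 _ (fun j _ => mul_conjC_ge0 (A i j))) tr0.
have := psumr_eq0P (fun j _ => mul_conjC_ge0 (A i j)) (row0 i isT) (i := j) isT.
by move/eqP; rewrite mul_conjC_eq0 => /eqP.
Qed.

End TraceAdjoint.

Lemma orth_proj_sandwich d (P Q : 'M[CC]_d) :
  orth_proj P -> orth_proj Q -> P *m Q *m P = (P *m Q) *m (P *m Q) ^t*.
Proof.
move=> [_ adjP] [idQ adjQ].
by rewrite trmx_mul map_mxM adjP adjQ -!mulmxA (mulmxA Q) idQ.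
Qed.

Lemma meas_vertex_orth (VF : finType) d (E : VF -> 'M[CC]_d) w w' :
  meas_vertex E -> w != w' -> E w *m E w' = 0.
Proof.
move=> [projE sumE] neq_ww'.
have sum_other : \sum_(v | v != w) E v = 1%:M - E w.
  by rewrite -sumE [X in _ = X - _](bigD1 w) //= addrC addrK.
have tr_sum0 : \sum_(v | v != w) \tr ((E w *m E v) *m (E w *m E v) ^t* ) = 0.
  under eq_bigr => v _ do rewrite -orth_proj_sandwich //.
  rewrite -raddf_sum -mulmx_suml -mulmx_sumr sum_other.
  by rewrite mulmxBr mulmx1 (projE w).1 subrr mul0mx raddf0.
apply: mxtrace_mul_trC_eq0.
by apply: (psumr_eq0P (fun v _ => mxtrace_mul_trC_ge0 _) tr_sum0); rewrite eq_sym.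
Qed.

Section Tensor.
Context {R : pzRingType}.

Lemma tensmx_sum (I J : finType) m n p q
    (A : I -> 'M[R]_(m, n)) (B : J -> 'M[R]_(p, q)) :
  \sum_(ij : I * J) A ij.1 *t B ij.2 = (\sum_i A i) *t (\sum_j B j).
Proof.
apply/matrixP => a b.
case: (mxtens_indexP a) => i j; case: (mxtens_indexP b) => k l.
rewrite tensmxE !summxE mulr_suml.
under [RHS]eq_bigr => u _ do rewrite mulr_sumr.
by rewrite pair_big; apply: eq_bigr => -[u v] _; rewrite tensmxE.
Qed.

Lemma tensmx11 m n : (1%:M : 'M[R]_m) *t (1%:M : 'M[R]_n) = 1%:M.
Proof.
apply/matrixP => a b.
case: (mxtens_indexP a) => i j; case: (mxtens_indexP b) => k l.
rewrite tensmxE !mxE (inj_eq (can_inj (@mxtens_indexK m n))) xpair_eqE.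
by rewrite -natrM mulnb.
Qed.

End Tensor.

Lemma orth_proj_tens d1 d2 (P : 'M[CC]_d1) (Q : 'M[CC]_d2) :
  orth_proj P -> orth_proj Q -> orth_proj (P *t Q).
Proof.
move=> [idP adjP] [idQ adjQ]; split; first by rewrite tensmx_mul idP idQ.
by rewrite trmx_tens map_mxT adjP adjQ.
Qed.

Definition meas_tens (VF VK : finType) d1 d2
    (E : VF -> 'M[CC]_d1) (E' : VK -> 'M[CC]_d2) : VF * VK -> 'M[CC]_(d1 * d2) :=
  fun wk => E wk.1 *t E' wk.2.

Lemma meas_vertex_tens (VF VK : finType) d1 d2
    (E : VF -> 'M[CC]_d1) (E' : VK -> 'M[CC]_d2) :
  meas_vertex E -> meas_vertex E' -> meas_vertex (meas_tens E E').
Proof.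
move=> [projE sumE] [projE' sumE']; split.
  by move=> wk; apply: orth_proj_tens.
by rewrite /meas_tens (tensmx_sum E E') sumE sumE' tensmx11.
Qed.

Definition orth_forced (VG VF : finType) (eG : rel VG) (eF : rel VF)
    (x x' : VG) (w w' : VF) : bool :=
  (eG x x' && ~~ eF w w') || ((x == x') && (w != w')).

Lemma meas_hom_orth (VG VF : finType) (eG : rel VG) (eF : rel VF) d
    (p : VG -> VF -> 'M[CC]_d) x x' w w' :
  (forall x, meas_vertex (p x)) ->
  (forall x y, eG x y -> meas_adj eF (p x) (p y)) ->
  orth_forced eG eF x x' w w' -> p x w *m p x' w' = 0.
Proof.
move=> vert_p hom_p /orP[/andP[xx' ww'] | /andP[/eqP<- ww']].
  exact: hom_p.
exact: meas_vertex_orth.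
Qed.

Lemma quantum_hom_tens (VG VH VF VK : finType)
    (eG : rel VG) (eH : rel VH) (eF : rel VF) (eK : rel VK)
    (eGH : rel (VG * VH)) (eFK : rel (VF * VK)) :
  quantum_hom eG eF -> quantum_hom eH eK ->
  (forall x x' w w', eGH x x' -> ~~ eFK w w' ->
     orth_forced eG eF x.1 x'.1 w.1 w'.1 || orth_forced eH eK x.2 x'.2 w.2 w'.2) ->
  quantum_hom eGH eFK.
Proof.
move=> [d1 [p [d1_gt0 [vert_p hom_p]]]] [d2 [q [d2_gt0 [vert_q hom_q]]]] forced.
exists (d1 * d2)%N, (fun x => meas_tens (p x.1) (q x.2)).
split; first by rewrite muln_gt0 d1_gt0 d2_gt0.
split=> [x | x x' xx' w w' ww']; first exact: meas_vertex_tens.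
rewrite /meas_tens tensmx_mul.
case/orP: (forced x x' w w' xx' ww') => /meas_hom_orth.
  by move=> -> //; rewrite tens0mx.
by move=> -> //; rewrite tensmx0.
Qed.

Theorem lemma7p1 (VG VH VF VK : finType)
    (eG : rel VG) (eH : rel VH) (eF : rel VF) (eK : rel VK) :
  simple_graph eG -> simple_graph eH -> simple_graph eF -> simple_graph eK ->
  quantum_hom eG eF -> quantum_hom eH eK ->
  [/\ quantum_hom (cart_prod eG eH) (cart_prod eF eK),
      quantum_hom (cat_prod eG eH) (cat_prod eF eK),
      quantum_hom (strong_prod eG eH) (strong_prod eF eK),
      quantum_hom (disj_prod eG eH) (disj_prod eF eK)
    & quantum_hom (lex_prod eG eH) (lex_prod eF eK)].
Proof.
(* Simplicity is not needed: each case is a tautology in the eight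
   adjacency and equality booleans of the coordinates. *)
move=> _ _ _ _ hom_GF hom_HK.
split; apply: (quantum_hom_tens hom_GF hom_HK)
  => -[x1 x2] [x1' x2'] [w1 w2] [w1' w2'];
  rewrite /strong_prod /cart_prod /cat_prod /disj_prod /lex_prod /orth_forced /=;
  move: (eG x1 x1') (eH x2 x2') (eF w1 w1') (eK w2 w2')
        (x1 == x1') (x2 == x2') (w1 == w1') (w2 == w2');
  by do 8!case.
Qed.
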